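(* If $q$ is an odd prime power and $\mathcal{S}$ is a $(q+2)$-element subset of $\mathbb{P}^2(\mathbb{F}_q)$, then there are at most two points $P\in\mathcal{S}$ with the property that no line through $P$ contains more than two points of $\mathcal{S}$. *)

From mathcomp Require Import all_boot all_order all_algebra all_field.
Set Implicit Arguments. Unset Strict Implicit. Unset Printing Implicit Defensive.
Import GRing.Theory.
Local Open Scope ring_scope.

(* Points of P^2(F): nonzero row vectors in F^3, normalized so that the first
   nonzero coordinate equals 1 (one canonical representative per point). *)
Definition normalized (F : fieldType) (v : 'rV[F]_3) : bool :=
  [exists i : 'I_3, (v 0 i == 1) && [forall j : 'I_3, (j < i)%N ==> (v 0 j == 0)]].

Definition PG2 (F : finFieldType) : {set 'rV[F]_3} := [set v | normalized v].

(* Lines of P^2(F) are given by nonzero coordinate vectors l;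
   the point P lies on the line l iff P . l = 0. *)
Definition incident (F : fieldType) (P l : 'rV[F]_3) : bool :=
  \sum_(i < 3) P 0 i * l 0 i == 0.

Definition line_pts (F : finFieldType) (S : {set 'rV[F]_3}) (l : 'rV[F]_3)
  : {set 'rV[F]_3} := [set X in S | incident X l].

Definition no_long_line (F : finFieldType) (S : {set 'rV[F]_3}) (P : 'rV[F]_3)
  : bool :=
  [forall l : 'rV[F]_3, ((l != 0) && incident P l) ==> (#|line_pts S l| <= 2)%N].

(* Segre's "lemma of tangents" argument.  Suppose three points P1, P2, P3 of S
   lie on no line meeting S in three points, and let T be the other q - 1
   points of S.  The lines P1 X (X in T) are q - 1 distinct lines through P1,
   none equal to P1 P2 or P1 P3, so their coordinates in the pencil at P1
   (with P1 P3 at 0 and P1 P2 at infinity) run through all of F^x, whose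
   product is -1.  The same holds at P2 and P3, while for each X the three
   pencil coordinates multiply to 1, a determinant identity.  Hence
   (-1)^3 = 1, which is impossible in odd characteristic. *)

From mathcomp Require Import all_boot all_order all_algebra all_field all_fingroup all_solvable.
From mathcomp Require Import ring.
Set Implicit Arguments. Unset Strict Implicit. Unset Printing Implicit Defensive.
Import GRing.Theory FinRing.Theory.
Local Open Scope ring_scope.

Section PlaneGeometry.
Variable F : fieldType.
Implicit Types u v w x y : 'rV[F]_3.

Definition i0 : 'I_3 := ord0.
Definition i1 : 'I_3 := lift ord0 ord0.
Definition i2 : 'I_3 := lift ord0 (lift ord0 ord0).

Definition det3 u v w : F :=
    w 0 i0 * (u 0 i1 * v 0 i2 - u 0 i2 * v 0 i1)
  + w 0 i1 * (u 0 i2 * v 0 i0 - u 0 i0 * v 0 i2)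
  + w 0 i2 * (u 0 i0 * v 0 i1 - u 0 i1 * v 0 i0).

Definition cross u v : 'rV[F]_3 :=
  \row_j (if j == i0 then u 0 i1 * v 0 i2 - u 0 i2 * v 0 i1
          else if j == i1 then u 0 i2 * v 0 i0 - u 0 i0 * v 0 i2
          else u 0 i0 * v 0 i1 - u 0 i1 * v 0 i0).

Lemma incident_cross u v w : incident w (cross u v) = (det3 u v w == 0).
Proof. by rewrite /incident !big_ord_recl big_ord0 addr0 addrA !mxE. Qed.

Lemma incident_cross_l u v : incident u (cross u v).
Proof. by rewrite incident_cross /det3; apply/eqP; ring. Qed.

Lemma incident_cross_r u v : incident v (cross u v).
Proof. by rewrite incident_cross /det3; apply/eqP; ring. Qed.

Lemma det3_rotate u v w : det3 u v w = det3 v w u.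
Proof. by rewrite /det3; ring. Qed.

Lemma det3_pluecker u v w x y :
  det3 u x w * det3 u v y - det3 u y w * det3 u v x = det3 u v w * det3 u x y.
Proof. by rewrite /det3; ring. Qed.

Lemma ord3P (i : 'I_3) : [\/ i = i0, i = i1 | i = i2].
Proof.
by case: i => [[|[|[|//]]] ?]; [constructor 1 | constructor 2 | constructor 3];
  apply: val_inj.
Qed.

Lemma cross_eq0_minor u v : cross u v = 0 ->
  forall i j, u 0 i * v 0 j = u 0 j * v 0 i.
Proof.
move=> uv0 i j; have uvk k : cross u v 0 k = 0 by rewrite uv0 mxE.
move: (uvk i0) (uvk i1) (uvk i2); rewrite !mxE /= => /subr0_eq e0 /subr0_eq e1 /subr0_eq e2.
by case: (ord3P i) => ->; case: (ord3P j) => ->; rewrite ?e0 ?e1 ?e2.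
Qed.

Lemma normalized_cross_eq0 u v :
  normalized u -> normalized v -> cross u v = 0 -> u = v.
Proof.
case/existsP=> i /andP[/eqP ui /forallP u_lt_i].
case/existsP=> j /andP[/eqP vj /forallP v_lt_j] /cross_eq0_minor minor.
have [lt_ij | lt_ji | /val_inj eq_ij] := ltngtP i j.
- have /eqP vi := implyP (v_lt_j i) lt_ij.
  by have := minor i j; rewrite ui vj vi mulr0 mul1r => /eqP; rewrite oner_eq0.
- have /eqP uj := implyP (u_lt_i j) lt_ji.
  by have := minor i j; rewrite ui vj uj mul0r mul1r => /eqP; rewrite oner_eq0.
- subst j; apply/rowP => k.
  by have := minor k i; rewrite ui vj mulr1 mul1r.
Qed.

(* The line [u x] in the pencil of lines through [u], in the affine coordinate
   sending [u w] to 0 and [u v] to infinity. *)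
Definition pencil_coord u v w x : F := det3 u x w / det3 u v x.

Lemma pencil_coord_cycle u v w x :
    det3 u v x != 0 -> det3 v w x != 0 -> det3 w u x != 0 ->
  pencil_coord u v w x * pencil_coord v w u x * pencil_coord w u v x = 1.
Proof.
move=> uvx vwx wux; rewrite /pencil_coord.
rewrite [det3 u x w]det3_rotate [det3 x w u]det3_rotate.
rewrite [det3 v x u]det3_rotate [det3 x u v]det3_rotate.
rewrite [det3 w x v]det3_rotate [det3 x v w]det3_rotate.
by field; rewrite uvx vwx wux.
Qed.
End PlaneGeometry.

Lemma mulrn_card_finZmod (U : finZmodType) (x : U) : x *+ #|U| = 0.
Proof. by rewrite -zmodXgE -cardsT expg_cardG ?inE. Qed.

Lemma two_neq0_odd_card (R : finNzRingType) : odd #|R| -> 2%:R != 0 :> R.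
Proof.
move=> odd_q; apply/eqP => two0.
have := mulrn_card_finZmod (1 : R).
rewrite -(odd_double_half #|R|) odd_q natrD -mul2n natrM two0 mul0r addr0.
exact/eqP/oner_neq0.
Qed.

Lemma prod_nonzero_finField (F : finFieldType) :
  \prod_(x : F | x != 0) x = (-1) ^+ #|F|.
Proof.
have q_gt1 := finNzRing_gt1 F; have q_gt0 := ltnW q_gt1.
have genPoly : 'X^(#|F|.-1) - 1 = \prod_(x : F | x != 0) ('X - x%:P).
  apply: (@mulfI _ 'X); first by rewrite polyX_eq0.
  rewrite mulrBr mulr1 -exprS prednK //.
  by rewrite finField_genPoly (bigD1 0) //= subr0.
move/(congr1 (horner^~ 0)): genPoly.
rewrite horner_prod !hornerE expr0n -subn1 subn_eq0 leqNgt q_gt1 sub0r.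
under eq_bigr do rewrite hornerXsubC sub0r.
rewrite prodrN cardC1 => /(congr1 ( *%R ((-1) ^+ #|F|.-1))).
rewrite mulrA -exprD addnn -[(-1) ^+ _.*2]signr_odd odd_double mul1r mulrN1 => <-.
by rewrite -mulN1r -exprS prednK.
Qed.

Lemma prod_inj_nonzero (F : finFieldType) (T : finType) (A : {set T}) (f : T -> F) :
    {in A &, injective f} -> {in A, forall x, f x != 0} -> #|A| = #|F|.-1 ->
  \prod_(x in A) f x = \prod_(y : F | y != 0) y.
Proof.
move=> f_inj f_nz cardA.
have imf : f @: A = [set~ 0].
  apply/eqP; rewrite eqEcard cardsC1 card_in_imset // cardA leqnn andbT.
  by apply/subsetP => _ /imsetP[x Ax ->]; rewrite !inE f_nz.
by rewrite -(big_imset id f_inj) imf; apply: eq_bigl => y; rewrite !inE.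
Qed.

Section PencilProduct.
Variables (F : finFieldType) (S : {set 'rV[F]_3}).
Hypothesis S_sub : S \subset PG2 F.

Lemma det3_neq0_no_long_line P X Y :
    P \in S -> no_long_line S P -> X \in S -> Y \in S ->
    P != X -> X != Y -> Y != P ->
  det3 P X Y != 0.
Proof.
move=> SP freeP SX SY PX XY YP.
have normS Z : Z \in S -> normalized Z by move/(subsetP S_sub); rewrite inE.
have PX_nz : cross P X != 0.
  by apply: contra_neq PX; apply: normalized_cross_eq0; apply: normS.
have := implyP (forallP freeP (cross P X)); rewrite PX_nz incident_cross_l => /(_ isT).
apply: contraTneq => PXY0; rewrite -ltnNge; apply/card_gt2P.
exists P, X, Y; rewrite !inE SP SX SY incident_cross_l incident_cross_r.
by rewrite incident_cross PXY0 eqxx.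
Qed.

Variables (A B C : 'rV[F]_3) (T : {set 'rV[F]_3}).
Hypotheses (SA : A \in S) (SB : B \in S) (SC : C \in S).
Hypotheses (AB : A != B) (BC : B != C) (CA : C != A).
Hypotheses (TS : T \subset S) (AT : A \notin T) (BT : B \notin T) (CT : C \notin T).

Lemma mem_outside_triangle X : X \in T -> [/\ X \in S, A != X, B != X & C != X].
Proof.
move=> TX; split; first exact: (subsetP TS).
- by apply: contraNneq AT => ->.
- by apply: contraNneq BT => ->.
- by apply: contraNneq CT => ->.
Qed.

Lemma prod_pencil_coord : no_long_line S A -> #|T| = #|F|.-1 ->
  \prod_(X in T) pencil_coord A B C X = \prod_(x : F | x != 0) x.
Proof.
move=> freeA cardT; have det_nz := det3_neq0_no_long_line SA freeA.
have ABC_nz : det3 A B C != 0 by rewrite det_nz.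
have AXC_nz X : X \in T -> det3 A X C != 0.
  by case/mem_outside_triangle=> SX AX _ CX; rewrite det_nz // eq_sym.
have ABX_nz X : X \in T -> det3 A B X != 0.
  by case/mem_outside_triangle=> SX AX BX _; rewrite det_nz // eq_sym.
have AXY_nz X Y : X \in T -> Y \in T -> X != Y -> det3 A X Y != 0.
  case/mem_outside_triangle=> SX AX _ _ /mem_outside_triangle[SY AY _ _] XY.
  by rewrite det_nz // eq_sym.
apply: prod_inj_nonzero cardT => [X Y TX TY | X TX]; last first.
  by rewrite mulf_neq0 ?invr_eq0 ?AXC_nz ?ABX_nz.
move/eqP; rewrite eqr_div ?ABX_nz // => /eqP eqXY.
apply/eqP; apply: contraT => XY.
have /esym/eqP := det3_pluecker A B C X Y.
by rewrite eqXY subrr mulf_eq0 (negbTE ABC_nz) (negbTE (AXY_nz X Y TX TY XY)).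
Qed.

Lemma prod_pencil_coord_cycle :
    no_long_line S A -> no_long_line S B -> no_long_line S C ->
  \prod_(X in T) (pencil_coord A B C X * pencil_coord B C A X * pencil_coord C A B X) = 1.
Proof.
move=> freeA freeB freeC; apply: big1 => X /mem_outside_triangle[SX AX BX CX].
by apply: pencil_coord_cycle; apply: det3_neq0_no_long_line; rewrite // eq_sym.
Qed.
End PencilProduct.

Theorem proposition1p3 (F : finFieldType) (S : {set 'rV[F]_3}) :
  odd #|F| ->
  S \subset PG2 F ->
  #|S| = (#|F| + 2)%N ->
  (#|[set P in S | no_long_line S P]| <= 2)%N.
Proof.
move=> odd_q S_sub cardS; rewrite leqNgt; apply/negP.
case/card_gt2P=> [P1 [P2 [P3 [[]]]]]; rewrite !inE.
move=> /andP[S1 free1] /andP[S2 free2] /andP[S3 free3] [P12 P23 P31].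
pose T := S :\: [set P1; P2; P3].
have TS : T \subset S by apply: subsetDl.
have [T1 T2 T3] : [/\ P1 \notin T, P2 \notin T & P3 \notin T] by rewrite !inE !eqxx !orbT.
have cardT : #|T| = #|F|.-1.
  rewrite cardsD (setIidPr _); last by rewrite !subUset !sub1set S1 S2 S3.
  rewrite setUC cardsU1 cards2 !inE negb_or P31 P12 [P3 == P2]eq_sym P23 cardS.
  by rewrite /= addn2 subSS -subn1.
have := prod_pencil_coord_cycle S_sub S1 S2 S3 P12 P23 P31 TS T1 T2 T3 free1 free2 free3.
rewrite 2!big_split /= !(prod_pencil_coord S_sub) // prod_nonzero_finField -signr_odd odd_q.
rewrite expr1 mulrNN !mul1r => /eqP; rewrite -subr_eq0 -opprD oppr_eq0.
by apply/negP; apply: two_neq0_odd_card.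
Qed.
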